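(* Let $\Sigma=\{0,1\}$ and $D=\Sigma(\Sigma\Sigma)^*\setminus\left(\Sigma^*11\Sigma^*\cup000\Sigma^*\cup101\Sigma^*\right)$. The map $\mathrm{val}_{\mathcal{F}c}$ is an increasing bijection from $(D,\prec)$ to $(\mathbb{Z},<)$.
   Context: Fibonacci numbers: $F_0=1$, $F_1=2$, $F_n=F_{n-1}+F_{n-2}$ for $n\ge2$. For a nonempty binary word $w=w_{k-1}\cdots w_0$ (digits indexed from the right), $\mathrm{val}_{\mathcal{F}c}(w)=\sum_{i=0}^{k-1}w_iF_i-w_{k-1}F_k$. Orders: $u<_{rad}v$ iff $|u|<|v|$, or $|u|=|v|$ and $u<_{lex}v$; $u<_{rev}v$ iff $|u|>|v|$, or $|u|=|v|$ and $u<_{lex}v$. The total order $\prec$ on $\Sigma^*$: $u\prec v$ iff either $u\in1\Sigma^*$ and $v\in0\Sigma^*$; or $u,v\in0\Sigma^*$ and $u<_{rad}v$; or $u,v\in1\Sigma^*$ and $u<_{rev}v$. *)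

(* Binary words over Sigma = {0,1} are [seq bool]
   (false = 0, true = 1), written left to right: the word
   w = w_{k-1} ... w_0 is the list [:: w_{k-1}; ...; w_0]. *)
From mathcomp Require Import all_boot all_order all_algebra.
Set Implicit Arguments. Unset Strict Implicit. Unset Printing Implicit Defensive.
Import Order.TTheory GRing.Theory Num.Theory.

Fixpoint Fib (n : nat) : nat :=
  match n with
  | 0 => 1
  | 1 => 2
  | (m.+1 as p).+1 => Fib p + Fib m
  end.

Definition word := seq bool.

Definition digit (w : word) (i : nat) : bool := nth false w (size w - 1 - i).

Definition valFc (w : word) : int :=
  ((\sum_(i < size w) (digit w i)%:Z * (Fib i)%:Z)
   - (digit w (size w - 1))%:Z * (Fib (size w))%:Z)%R.

Fixpoint lexlt (u v : word) : bool :=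
  match u, v with
  | a :: u', b :: v' => (~~ a && b) || ((a == b) && lexlt u' v')
  | [::], _ :: _ => true
  | _, _ => false
  end.

Definition radlt (u v : word) : bool :=
  (size u < size v) || ((size u == size v) && lexlt u v).

Definition revlt (u v : word) : bool :=
  (size u > size v) || ((size u == size v) && lexlt u v).

Definition starts_with (b : bool) (w : word) : bool :=
  if w is a :: _ then a == b else false.

Definition prec (u v : word) : bool :=
  [|| starts_with true u && starts_with false v,
      [&& starts_with false u, starts_with false v & radlt u v]
    | [&& starts_with true u, starts_with true v & revlt u v]].

Fixpoint has11 (w : word) : bool :=
  match w with
  | true :: (true :: _) as w' => true
  | _ :: w' => has11 w'
  | [::] => false
  end.

Definition inD (w : word) : bool :=
  [&& odd (size w), ~~ has11 w,
      ~~ prefix [:: false; false; false] w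
    & ~~ prefix [:: true; false; true] w].

(* For a word 0u the value is the Zeckendorf value Z(u) = sum_i u_i F_i, and
   for a word 1u it is Z(1u) - F_{|u|+1} < 0; so the words starting with 1 sit
   below those starting with 0.  Among words of D of a fixed length, Z is
   increasing for the lexicographic order, and the excluded prefixes 000 and
   101 make the value ranges of the lengths 1, 3, 5, ... consecutive: upwards
   from 0 for the words 0u, downwards from -1 for the words 1u.  Hence
   val_Fc is strictly increasing for the total order [prec], so injective,
   and the Zeckendorf representation theorem gives every integer. *)
From mathcomp Require Import all_boot all_order all_algebra.
From mathcomp Require Import zify.
Import Order.TTheory GRing.Theory Num.Theory.

Lemma FibSS n : Fib n.+2 = Fib n.+1 + Fib n. Proof. by []. Qed.
Arguments Fib : simpl never.

Lemma Fib_gt0 n : 0 < Fib n.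
Proof. by elim/ltn_ind: n => -[|[|n]] // IH; rewrite FibSS addn_gt0 IH. Qed.

Lemma leq_FibS n : Fib n <= Fib n.+1.
Proof. by case: n => // n; rewrite FibSS leq_addr. Qed.

Lemma leq_Fib m n : m <= n -> Fib m <= Fib n.
Proof.
move=> le_mn; rewrite -(subnKC le_mn); elim: (n - m) => [|k IH]; first by rewrite addn0.
by rewrite addnS (leq_trans IH (leq_FibS _)).
Qed.

Lemma ltn_FibSS n : Fib n < Fib n.+2.
Proof. by rewrite FibSS -[X in X < _]add0n ltn_add2r Fib_gt0. Qed.

Lemma leq_FibS_double n : Fib n.+1 <= 2 * Fib n.
Proof. by case: n => // n; rewrite FibSS mul2n -addnn leq_add2l leq_FibS. Qed.

(* The gap F_{n+1} - F_n is F_{n-1}, written without the index shift. *)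
Lemma leq_Fib_gap m n : m <= n -> Fib m.+1 - Fib m <= Fib n.+1 - Fib n.
Proof.
move=> le_mn; rewrite -(subnKC le_mn); elim: (n - m) => [|k IH]; first by rewrite addn0.
by rewrite addnS FibSS; have := leq_FibS_double (m + k); lia.
Qed.

Lemma odd_ltn_gap m n : odd m -> odd n -> m < n -> m.+2 <= n.
Proof.
move=> om on lt_mn; have : n != m.+1 by apply: contraTneq on => ->; rewrite /= om.
lia.
Qed.

Arguments odd_ltn_gap {m n}.

Lemma has11_cons a w : has11 (a :: w) = (a && head false w) || has11 w.
Proof. by case: a; case: w => [|[] w]. Qed.

Lemma no11_behead a w : ~~ has11 (a :: w) -> ~~ has11 w.
Proof. by rewrite has11_cons negb_or => /andP []. Qed.

Arguments no11_behead {a w}.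

Fixpoint zval (w : word) : nat :=
  if w is b :: w' then b * Fib (size w') + zval w' else 0.

Lemma zval_lt_Fib w : ~~ has11 w -> zval w < Fib (size w).
Proof.
have [n] := ubnP (size w); elim: n w => // n IH [|[] w] // size_w; last first.
  move=> /no11_behead /(IH w (ltnSE size_w)) /=; rewrite mul0n.
  by have := leq_FibS (size w); lia.
case: w size_w => [|[] w] // size_w /no11_behead /no11_behead.
by move=> /(IH w (ltnW (ltnSE size_w))) /=; rewrite FibSS; lia.
Qed.

Arguments zval_lt_Fib {w}.

Lemma zval_lex u v :
  size u = size v -> ~~ has11 u -> ~~ has11 v -> lexlt u v -> zval u < zval v.
Proof.
elim: u v => [|a u IH] [|b v] // [size_uv] no11u no11v.
have no11u' := no11_behead no11u; have no11v' := no11_behead no11v.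
move=> /= /orP [/andP [/negbTE -> ->]|/andP [/eqP <- lt_uv]].
- by rewrite -size_uv; have := zval_lt_Fib no11u'; lia.
- by have := IH v size_uv no11u' no11v' lt_uv; rewrite size_uv; lia.
Qed.

Arguments zval_lex {u v}.

Lemma zval_onto n x : x < Fib n -> exists w, [/\ size w = n, ~~ has11 w & zval w = x].
Proof.
elim/ltn_ind: n x => -[|[|n]] IH x lt_x.
- by exists [::]; case: x lt_x.
- by case: x lt_x => [|[|]] // _; [exists [:: false] | exists [:: true]].
- have [lt_x1|ge_x1] := ltnP x (Fib n.+1).
  + have [w [size_w no11 <-]] := IH n.+1 (ltnSn _) x lt_x1.
    by exists (false :: w); rewrite /= size_w.
  + have lt_x0 : x - Fib n.+1 < Fib n by rewrite FibSS in lt_x; lia.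
    have [w [size_w no11 val_w]] := IH n (ltnW (ltnSn _)) _ lt_x0.
    by exists [:: true, false & w]; rewrite /= size_w val_w; split => //; lia.
Qed.

Lemma lexlt_total u v : size u = size v -> u <> v -> lexlt u v || lexlt v u.
Proof.
elim: u v => [|a u IH] [|b v] //= [size_uv] neq_uv.
by case: a b neq_uv => [] [] neq_uv //=; rewrite ?orbF;
  apply: IH => // e; apply: neq_uv; rewrite e.
Qed.

Arguments lexlt_total {u v}.

Lemma digit_cons b w i : i < size w -> digit (b :: w) i = digit w i.
Proof. by move=> lt_i; rewrite /digit /= subn1 /= -subnDA add1n -(subnSK lt_i). Qed.

Lemma digit_cons_size b w : digit (b :: w) (size w) = b.
Proof. by rewrite /digit /= subn1 subnn. Qed.

Lemma sum_digit_Fib w : (\sum_(i < size w) (digit w i)%:Z * (Fib i)%:Z)%R = zval w.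
Proof.
elim: w => [|b w IH]; first by rewrite big_ord0.
rewrite /= big_ord_recr /= digit_cons_size PoszD PoszM addrC -IH.
by congr (_ + _)%R; apply: eq_bigr => i _; rewrite digit_cons.
Qed.

Lemma valFc_cons b w :
  valFc (b :: w) = ((zval (b :: w))%:Z - (b * Fib (size w).+1)%:Z)%R.
Proof. by rewrite /valFc sum_digit_Fib /= subn1 /= digit_cons_size PoszM. Qed.

Lemma valFc_false w : valFc (false :: w) = Posz (zval w).
Proof. by rewrite valFc_cons /= mul0n subr0. Qed.

Lemma valFc_true w :
  valFc (true :: w) = ((Fib (size w) + zval w)%:Z - (Fib (size w).+1)%:Z)%R.
Proof. by rewrite valFc_cons /= !mul1n. Qed.

Section Monotone.
Local Open Scope ring_scope.

Lemma valFc_true_lt_false u v :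
  ~~ has11 (true :: u) -> valFc (true :: u) < valFc (false :: v).
Proof. by move=> /zval_lt_Fib; rewrite valFc_true valFc_false /= mul1n; lia. Qed.

Lemma valFc_false_mono u v : inD (false :: u) -> inD (false :: v) ->
  radlt (false :: u) (false :: v) -> valFc (false :: u) < valFc (false :: v).
Proof.
move=> /and4P [odd_u no11u _ _] /and4P [odd_v no11v no000 _].
have no11u' := no11_behead no11u; rewrite !valFc_false.
case/orP => [lt_uv | /andP [/eqP [size_uv] lex_uv]]; last first.
  by have := zval_lex size_uv no11u' (no11_behead no11v) lex_uv; lia.
have gap := odd_ltn_gap odd_u odd_v lt_uv.
(* v starts with 1 or 01, so zval v >= F_{|v|-2} >= F_{|u|} > zval u *)
case: v no11v no000 odd_v lt_uv gap => [|b1 [|b2 x]] //= no11v no000 _ _ gap.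
have := @leq_Fib (size u) (size x) ltac:(lia); have := zval_lt_Fib no11u'.
have := leq_FibS (size x).
by case: b1 b2 no000 no11v => [] [] //=; rewrite ?prefix0s // => *; lia.
Qed.

Lemma valFc_true_mono u v : inD (true :: u) -> inD (true :: v) ->
  revlt (true :: u) (true :: v) -> valFc (true :: u) < valFc (true :: v).
Proof.
move=> /and4P [odd_u no11u _ no101] /and4P [odd_v no11v _ _].
have no11u' := no11_behead no11u; have no11v' := no11_behead no11v.
case/orP => [lt_vu | /andP [/eqP [size_uv] lex_uv]]; last first.
  rewrite !valFc_true; have := zval_lex size_uv no11u' no11v' lex_uv.
  by rewrite size_uv; lia.
have gap := odd_ltn_gap odd_v odd_u lt_vu.
(* a word 1u of length > 1 starts with 100, and valFc (100x) = zval x - F_{|x|+1} *)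
case: u no11u' no11u no101 odd_u lt_vu gap => [|[] [|[] x]] //= no11x.
rewrite ?prefix0s //.
move=> _ _ _ _ gap; rewrite !valFc_true /= !mul0n !add0n.
have := zval_lt_Fib no11x.
have := @leq_Fib_gap (size v) (size x) ltac:(lia).
have := leq_FibS (size x); have := leq_FibS (size v).
by have := FibSS (size x).+1; have := FibSS (size x); lia.
Qed.

Lemma valFc_mono u v : inD u -> inD v -> prec u v -> valFc u < valFc v.
Proof.
case: u v => [|[] u] [|[] v] // inDu inDv; rewrite /prec /= ?andbF ?orbF //.
- exact: valFc_true_mono.
- by move=> _; apply: valFc_true_lt_false; case/and4P: inDu.
- exact: valFc_false_mono.
Qed.

End Monotone.

Arguments valFc_mono {u v}.

Lemma radlt_total u v : u <> v -> radlt u v || radlt v u.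
Proof.
move=> neq_uv; rewrite /radlt eq_sym.
by case: ltngtP => //= size_uv; apply: lexlt_total.
Qed.

Lemma revlt_total u v : u <> v -> revlt u v || revlt v u.
Proof.
move=> neq_uv; rewrite /revlt eq_sym.
by case: ltngtP => //= size_uv; apply: lexlt_total.
Qed.

Lemma prec_total u v : inD u -> inD v -> u <> v -> prec u v || prec v u.
Proof.
case: u => [|a u] //; case: v => [|b v] // _ _ neq_uv; rewrite /prec /=.
by case: a b neq_uv => [] [] neq_uv //=; rewrite ?orbF ?radlt_total ?revlt_total.
Qed.

Arguments prec_total {u v}.

Lemma valFc_inj u v : inD u -> inD v -> valFc u = valFc v -> u = v.
Proof.
move=> inDu inDv eq_val; have [//|/eqP neq_uv] := eqVneq u v.
have /orP [prec_uv|prec_vu] := prec_total inDu inDv neq_uv.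
- by have := valFc_mono inDu inDv prec_uv; rewrite eq_val ltxx.
- by have := valFc_mono inDv inDu prec_vu; rewrite eq_val ltxx.
Qed.

Lemma Fib_even_bracket y : 0 < y -> exists m, Fib m.*2 <= y < Fib m.+1.*2.
Proof.
elim: y => // -[|y] IH _; first by exists 0.
have [m /andP [ge_y lt_y]] := IH isT.
have [lt_y1|ge_y1] := ltnP y.+2 (Fib m.+1.*2); first by exists m; lia.
by exists m.+1; have := ltn_FibSS m.+1.*2; rewrite -!doubleS; lia.
Qed.

Lemma Fib_odd_bracket y : 1 < y ->
  exists m, Fib m.*2.+1 - Fib m.*2 < y <= Fib m.*2.+1.
Proof.
elim: y => // -[|[|y]] IH // _; first by exists 0.
have [m /andP [gt_y le_y]] := IH isT.
have [le_y1|gt_y1] := leqP y.+3 (Fib m.*2.+1); first by exists m; lia.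
by exists m.+1; rewrite doubleS; have := FibSS m.*2.+1; have := FibSS m.*2; lia.
Qed.

Lemma valFc_onto_nonneg (y : nat) : exists w, inD w /\ valFc w = y.
Proof.
case: y => [|y]; first by exists [:: false]; rewrite valFc_false.
have [m /andP [ge_y lt_y]] := @Fib_even_bracket y.+1 isT.
have [u [size_u no11u val_u]] :=
  @zval_onto m.*2.+2 y.+1 ltac:(by rewrite -doubleS).
exists (false :: u); rewrite valFc_false val_u; split => //.
case: u size_u no11u val_u => [|b1 [|b2 x]] // [size_x] no11x val_x.
apply/and4P; split => //=; first by rewrite size_x odd_double.
(* zval (0 :: 0 :: x) < F_{2m} <= y + 1 *)
case: b1 b2 no11x val_x => [] [] //= no11x val_x; rewrite prefix0s /=.
by have := zval_lt_Fib no11x; rewrite size_x; lia.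
Qed.

Lemma valFc_onto_neg (y : nat) : exists w, inD w /\ valFc w = Negz y.
Proof.
case: y => [|y]; first by exists [:: true]; rewrite valFc_true.
have [m /andP [gt_y le_y]] := @Fib_odd_bracket y.+2 isT.
have [v [size_v no11v val_v]] := @zval_onto m.*2 (Fib m.*2.+1 - y.+2)
  ltac:(have := leq_FibS m.*2; lia).
exists [:: true, false, false & v]; split.
- by apply/and4P; split; rewrite //= ?size_v ?odd_double // !has11_cons.
- rewrite valFc_true /= size_v val_v !mul0n !add0n NegzE.
  by have := FibSS m.*2.+1; have := FibSS m.*2; lia.
Qed.

Lemma valFc_onto z : exists w, inD w /\ valFc w = z.
Proof. by case: z; [exact: valFc_onto_nonneg | exact: valFc_onto_neg]. Qed.

Theorem lemma6p7 :
  (forall u v : word, inD u -> inD v -> prec u v -> (valFc u < valFc v)%R) /\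
  (forall z : int, exists w : word, inD w /\ valFc w = z) /\
  (forall u v : word, inD u -> inD v -> valFc u = valFc v -> u = v).
Proof. by split; [exact: @valFc_mono | split; [exact: valFc_onto | exact: valFc_inj]]. Qed.
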